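(* Let $J$ be a non-degenerate interval, $f_{1,\infty}$ an $m$-periodic sequence of continuous surjective self-maps of $J$, and $g=f_m\circ\cdots\circ f_1$. If the autonomous system $(J,g)$ is topologically transitive, then $(J,f_{1,\infty})$ is Devaney chaotic.
   Context: $m$-periodic: $f_{n+m}=f_n$ for all $n$. Write $f_1^n=f_n\circ\cdots\circ f_1$. For the non-autonomous system: topologically transitive means for all non-empty open $U,V$ some $n$ with $f_1^n(U)\cap V\ne\emptyset$; a point $x$ is periodic if there is $n$ with $f_1^{nk}(x)=x$ for all $k\in\mathbb{N}$; sensitive means there is $\delta>0$ such that for every $x$ and neighbourhood $U$ of $x$ there exist $y\in U$, $n$ with $|f_1^n(x)-f_1^n(y)|>\delta$; Devaney chaotic means topologically transitive, dense periodic points, and sensitive. *)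

From Stdlib Require Import Reals.
Open Scope R_scope.

Definition is_interval (J : R -> Prop) : Prop :=
  forall x y z, J x -> J z -> x <= y -> y <= z -> J y.

Definition nondegenerate (J : R -> Prop) : Prop :=
  exists a b, J a /\ J b /\ a < b.

Definition rel_open (J U : R -> Prop) : Prop :=
  (forall x, U x -> J x) /\
  forall x, U x -> exists eps, eps > 0 /\
    forall y, J y -> Rabs (y - x) < eps -> U y.

Definition nonempty (U : R -> Prop) : Prop := exists x, U x.

Definition maps_into (J : R -> Prop) (f : R -> R) : Prop :=
  forall x, J x -> J (f x).

Definition cont_on (J : R -> Prop) (f : R -> R) : Prop :=
  forall x, J x -> forall eps, eps > 0 -> exists delta, delta > 0 /\
    forall y, J y -> Rabs (y - x) < delta -> Rabs (f y - f x) < eps.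

Definition surj_on (J : R -> Prop) (f : R -> R) : Prop :=
  forall y, J y -> exists x, J x /\ f x = y.

Definition cont_surj_self_map (J : R -> Prop) (f : R -> R) : Prop :=
  maps_into J f /\ cont_on J f /\ surj_on J f.

(* Sequences f_1, f_2, ... are modelled as f : nat -> R -> R, with the
   index 0 unused.  naiter f n = f_1^n = f_n o ... o f_1, naiter f 0 = id. *)
Fixpoint naiter (f : nat -> R -> R) (n : nat) (x : R) : R :=
  match n with
  | O => x
  | S k => f (S k) (naiter f k x)
  end.

Definition m_periodic (f : nat -> R -> R) (m : nat) : Prop :=
  (1 <= m)%nat /\ forall n, (1 <= n)%nat -> f (n + m)%nat = f n.

Fixpoint iter (g : R -> R) (n : nat) (x : R) : R :=
  match n with
  | O => x
  | S k => g (iter g k x)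
  end.

Definition auto_transitive (J : R -> Prop) (g : R -> R) : Prop :=
  forall U V, rel_open J U -> nonempty U -> rel_open J V -> nonempty V ->
    exists n, (1 <= n)%nat /\ exists x, U x /\ V (iter g n x).

Definition na_transitive (J : R -> Prop) (f : nat -> R -> R) : Prop :=
  forall U V, rel_open J U -> nonempty U -> rel_open J V -> nonempty V ->
    exists n, (1 <= n)%nat /\ exists x, U x /\ V (naiter f n x).

Definition na_periodic_point (f : nat -> R -> R) (x : R) : Prop :=
  exists n, (1 <= n)%nat /\ forall k, (1 <= k)%nat -> naiter f (n * k) x = x.

Definition na_dense_periodic (J : R -> Prop) (f : nat -> R -> R) : Prop :=
  forall U, rel_open J U -> nonempty U -> exists x, U x /\ na_periodic_point f x.

Definition na_sensitive (J : R -> Prop) (f : nat -> R -> R) : Prop :=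
  exists delta, delta > 0 /\
    forall x U, J x -> rel_open J U -> U x ->
      exists y n, U y /\ Rabs (naiter f n x - naiter f n y) > delta.

Definition na_devaney_chaotic (J : R -> Prop) (f : nat -> R -> R) : Prop :=
  na_transitive J f /\ na_dense_periodic J f /\ na_sensitive J f.

(* Since f is m-periodic, f_1^(m j) = g^j, so all three properties may be proved
   for the autonomous interval map g.  Periodic points
   are dense: on a segment of J free of periodic points every g^k - id has constant
   sign, but transitivity yields iterates g^a moving some point leftwards and g^b
   moving some point rightwards inside the segment, and then g^(ab) - id would have
   both signs.  Sensitivity follows as in Banks et al.: two periodic points with
   disjoint orbits keep every point far from one of them, and a periodic point close
   to x together with a transitive point close to x separate along that orbit. *)
From Stdlib Require Import Reals Lra Lia Classical.
Open Scope R_scope.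

Definition periodic_point (g : R -> R) (x : R) : Prop :=
  exists N, (1 <= N)%nat /\ iter g N x = x.

Definition dense_periodic (J : R -> Prop) (g : R -> R) : Prop :=
  forall U, rel_open J U -> nonempty U -> exists x, U x /\ periodic_point g x.

Definition sensitive (J : R -> Prop) (g : R -> R) : Prop :=
  exists delta, delta > 0 /\
    forall x U, J x -> rel_open J U -> U x ->
      exists y n, U y /\ Rabs (iter g n x - iter g n y) > delta.

Lemma iter_add g a b x : iter g (a + b) x = iter g a (iter g b x).
Proof. induction a; simpl; congruence. Qed.

Lemma iter_Sr g n x : iter g (S n) x = iter g n (g x).
Proof. replace (S n) with (n + 1)%nat by lia. now rewrite iter_add. Qed.

Lemma iter_fixed_mul g N x j : iter g N x = x -> iter g (N * j) x = x.
Proof.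
  intro Hx. induction j as [|j IH]; [now rewrite Nat.mul_0_r|].
  replace (N * S j)%nat with (N + N * j)%nat by lia.
  now rewrite iter_add, IH.
Qed.

Lemma iter_fixed_mod g N x i : N <> 0%nat -> iter g N x = x ->
  iter g i x = iter g (i mod N) x.
Proof.
  intros HN Hx. rewrite (Nat.div_mod_eq i N) at 1.
  now rewrite Nat.add_comm, iter_add, iter_fixed_mul.
Qed.

Lemma naiter_period_add f m n x : m_periodic f m ->
  naiter f (m + n) x = naiter f n (naiter f m x).
Proof.
  intros [Hm Hf]. induction n as [|n IH]; [now rewrite Nat.add_0_r|].
  replace (m + S n)%nat with (S (m + n)) by lia. simpl. rewrite IH.
  replace (S (m + n)) with (S n + m)%nat by lia. now rewrite Hf by lia.
Qed.

Lemma naiter_period_mul f m j x : m_periodic f m ->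
  naiter f (m * j) x = iter (naiter f m) j x.
Proof.
  intro Hf. revert x. induction j as [|j IH]; intro x; [now rewrite Nat.mul_0_r|].
  replace (m * S j)%nat with (m + m * j)%nat by lia.
  now rewrite naiter_period_add, IH, iter_Sr.
Qed.

Lemma nat_mul_between N k : (1 <= N)%nat -> exists j, (k <= N * j <= k + N)%nat.
Proof.
  intro HN. exists (k / N + 1)%nat.
  pose proof (Nat.div_mod_eq k N). pose proof (Nat.mod_upper_bound k N ltac:(lia)).
  nia.
Qed.

Lemma cont_on_id J : cont_on J (fun x => x).
Proof. intros x _ eps Heps. exists eps. auto. Qed.

Lemma cont_on_comp J h1 h2 : maps_into J h1 -> cont_on J h1 -> cont_on J h2 ->
  cont_on J (fun x => h2 (h1 x)).
Proof.
  intros M1 C1 C2 x Jx eps Heps.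
  destruct (C2 (h1 x) (M1 x Jx) eps Heps) as [d2 [Hd2 H2]].
  destruct (C1 x Jx d2 Hd2) as [d1 [Hd1 H1]].
  exists d1. split; [exact Hd1|]. intros y Jy Hy. apply H2; auto.
Qed.

Lemma iter_self_map J g n : maps_into J g -> cont_on J g ->
  maps_into J (iter g n) /\ cont_on J (iter g n).
Proof.
  intros Mg Cg. induction n as [|n [M C]]; [split; [now intro|apply cont_on_id]|].
  split; [intros x Jx; apply Mg, M, Jx|exact (cont_on_comp J _ _ M C Cg)].
Qed.

Lemma naiter_self_map J f n :
  (forall k, (1 <= k)%nat -> maps_into J (f k) /\ cont_on J (f k)) ->
  maps_into J (naiter f n) /\ cont_on J (naiter f n).
Proof.
  intro Hf. induction n as [|n [M C]]; [split; [now intro|apply cont_on_id]|].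
  destruct (Hf (S n) ltac:(lia)) as [Mf Cf].
  split; [intros x Jx; apply Mf, M, Jx|exact (cont_on_comp J _ _ M C Cf)].
Qed.

Lemma rel_open_ext J A B : (forall t, A t <-> B t) -> rel_open J A -> rel_open J B.
Proof.
  intros E [SA OA]. split; [intros x Bx; apply SA, E, Bx|].
  intros x Bx. destruct (OA x (proj2 (E x) Bx)) as [e [He H]].
  exists e. split; [exact He|]. intros y Jy Hy. apply E, H; auto.
Qed.

Lemma rel_open_and J A B : rel_open J A -> rel_open J B ->
  rel_open J (fun t => A t /\ B t).
Proof.
  intros [SA OA] [SB OB]. split; [intros x [Ax _]; auto|].
  intros x [Ax Bx].
  destruct (OA x Ax) as [e1 [He1 H1]]. destruct (OB x Bx) as [e2 [He2 H2]].
  exists (Rmin e1 e2). split; [now apply Rmin_glb_lt|].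
  pose proof (Rmin_l e1 e2). pose proof (Rmin_r e1 e2).
  intros y Jy Hy. split; [apply H1|apply H2]; auto; lra.
Qed.

Lemma rel_open_cont_ball J h c d : cont_on J h ->
  rel_open J (fun t => J t /\ Rabs (h t - c) < d).
Proof.
  intro C. split; [intros x [Jx _]; exact Jx|].
  intros x [Jx Hx].
  destruct (C x Jx (d - Rabs (h x - c))) as [e [He H]]; [lra|].
  exists e. split; [exact He|]. intros y Jy Hy. split; [exact Jy|].
  specialize (H y Jy Hy).
  pose proof (Rabs_triang (h y - h x) (h x - c)) as T.
  replace (h y - h x + (h x - c)) with (h y - c) in T by ring. lra.
Qed.

Lemma rel_open_ball J c d : rel_open J (fun t => J t /\ Rabs (t - c) < d).
Proof. apply (rel_open_cont_ball J (fun t => t)), cont_on_id. Qed.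

Lemma rel_open_open_interval J a b : rel_open J (fun t => J t /\ a < t < b).
Proof.
  split; [intros x [Jx _]; exact Jx|].
  intros x [Jx Hx]. exists (Rmin (x - a) (b - x)).
  split; [apply Rmin_glb_lt; lra|].
  pose proof (Rmin_l (x - a) (b - x)). pose proof (Rmin_r (x - a) (b - x)).
  intros y Jy Hy. split; [exact Jy|]. split_Rabs; lra.
Qed.

Lemma nonempty_open_interval J a b : a < b -> (forall t, a < t < b -> J t) ->
  nonempty (fun t => J t /\ a < t < b).
Proof. intros Hab HJ. exists ((a + b) / 2). split; [apply HJ|]; lra. Qed.

Lemma rel_open_contains_segment J U x : is_interval J -> nondegenerate J ->
  rel_open J U -> U x -> exists p q, p < q /\ forall t, p <= t <= q -> U t.
Proof.
  intros IJ [a [b [Ja [Jb Hab]]]] [SU OU] Ux.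
  destruct (OU x Ux) as [e [He H]]. pose proof (SU x Ux) as Jx.
  destruct (Rlt_dec x b) as [Hxb|Hxb].
  - exists x, (Rmin b (x + e / 2)). split; [apply Rmin_glb_lt; lra|].
    pose proof (Rmin_l b (x + e / 2)). pose proof (Rmin_r b (x + e / 2)).
    intros t Ht. apply H; [apply (IJ x t b)|split_Rabs]; auto; lra.
  - exists (Rmax a (x - e / 2)), x. split; [apply Rmax_lub_lt; lra|].
    pose proof (Rmax_l a (x - e / 2)). pose proof (Rmax_r a (x - e / 2)).
    intros t Ht. apply H; [apply (IJ a t x)|split_Rabs]; auto; lra.
Qed.

Lemma rel_open_orbit_tube J g q d N : maps_into J g -> cont_on J g ->
  rel_open J (fun t => J t /\ forall i, (i <= N)%nat -> Rabs (iter g i t - iter g i q) < d).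
Proof.
  intros Mg Cg. induction N as [|N IH].
  - apply (rel_open_ext J (fun t => J t /\ Rabs (t - q) < d)); [|apply rel_open_ball].
    intro t. split; intros [Jt H]; split; auto.
    + intros i Hi. replace i with 0%nat by lia. exact H.
    + exact (H 0%nat (le_n 0)).
  - eapply rel_open_ext; [|apply (rel_open_and J _ _ IH
      (rel_open_cont_ball J _ (iter g (S N) q) d (proj2 (iter_self_map J g (S N) Mg Cg))))].
    intro t. split.
    + intros [[Jt H] [_ H']]. split; [exact Jt|].
      intros i Hi. destruct (Nat.eq_dec i (S N)) as [->|]; [exact H'|apply H; lia].
    + intros [Jt H]. repeat split; auto.
Qed.

(* Clamping extends a map continuous on [lo, hi] to a continuous map on R. *)
Definition clamp lo hi t := Rmax lo (Rmin hi t).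

Lemma clamp_bounds lo hi t : lo <= hi -> lo <= clamp lo hi t <= hi.
Proof. intro H. unfold clamp, Rmax, Rmin. repeat destruct Rle_dec; lra. Qed.

Lemma clamp_id lo hi t : lo <= t <= hi -> clamp lo hi t = t.
Proof. intro H. unfold clamp, Rmax, Rmin. repeat destruct Rle_dec; lra. Qed.

Lemma clamp_lipschitz lo hi x y : lo <= hi ->
  Rabs (clamp lo hi y - clamp lo hi x) <= Rabs (y - x).
Proof. intro H. unfold clamp, Rmax, Rmin. repeat destruct Rle_dec; split_Rabs; lra. Qed.

Lemma cont_on_segment_fixpoint J h lo hi : cont_on J h -> lo <= hi ->
  (forall t, lo <= t <= hi -> J t) -> (h lo - lo) * (h hi - hi) <= 0 ->
  exists z, lo <= z <= hi /\ h z = z.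
Proof.
  intros C Hlh HJ Hsign.
  set (F := fun t => h (clamp lo hi t) - clamp lo hi t).
  assert (CF : continuity F).
  { intros x eps Heps.
    destruct (C (clamp lo hi x) (HJ _ (clamp_bounds lo hi x Hlh)) (eps / 2))
      as [d [Hd Hh]]; [lra|].
    exists (Rmin d (eps / 2)). split; [apply Rmin_glb_lt; lra|].
    intros y [_ Hy]. simpl in *. unfold Rdist in *.
    pose proof (Rmin_l d (eps / 2)). pose proof (Rmin_r d (eps / 2)).
    pose proof (clamp_lipschitz lo hi x y Hlh) as L.
    assert (Rabs (h (clamp lo hi y) - h (clamp lo hi x)) < eps / 2)
      by (apply Hh; [apply HJ, clamp_bounds|]; lra).
    unfold F. split_Rabs; lra. }
  destruct (IVT_cor F lo hi CF Hlh) as [z [Hz Fz]].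
  { unfold F. now rewrite !clamp_id by lra. }
  exists z. split; [exact Hz|]. unfold F in Fz. rewrite clamp_id in Fz by lra. lra.
Qed.

Lemma fixpoint_free_same_side J h p q u v : is_interval J -> J p -> J q ->
  cont_on J h -> (forall z, p < z < q -> h z <> z) ->
  p < u < q -> p < v < q -> (h u - u) * (h v - v) > 0.
Proof.
  intros IJ Jp Jq C Hfree.
  assert (Side : forall u v, u <= v -> p < u < q -> p < v < q -> (h u - u) * (h v - v) > 0).
  { clear u v. intros u v Huv Hu Hv.
    apply Rnot_le_gt. intro Hsign.
    destruct (cont_on_segment_fixpoint J h u v C Huv) as [z [Hz Fz]]; auto.
    - intros t Ht. apply (IJ p t q); auto; lra.
    - apply (Hfree z); [lra|exact Fz]. }
  intros Hu Hv. destruct (Rle_dec u v); [now apply Side|].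
  rewrite Rmult_comm. apply Side; auto; lra.
Qed.

Lemma avoid_finite (s : nat -> R) a b k : a < b ->
  exists p q, a <= p /\ p < q /\ q <= b /\ forall i, (i < k)%nat -> ~ (p < s i < q).
Proof.
  intro Hab. induction k as [|k [p [q [Hap [Hpq [Hqb Hav]]]]]].
  { exists a, b. repeat split; try lra. intros; lia. }
  destruct (Rle_dec (s k) ((p + q) / 2)).
  - exists ((p + q) / 2), q. repeat split; try lra. intros i Hi.
    destruct (Nat.eq_dec i k) as [->|]; [lra|]. intro C. apply (Hav i); [lia|lra].
  - exists p, ((p + q) / 2). repeat split; try lra. intros i Hi.
    destruct (Nat.eq_dec i k) as [->|]; [lra|]. intro C. apply (Hav i); [lia|lra].
Qed.

(* The empty minimum is the harmless positive default 1. *)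
Fixpoint min_upto (G : nat -> R) (n : nat) : R :=
  match n with
  | O => 1
  | S k => Rmin (min_upto G k) (G k)
  end.

Lemma min_upto_pos G n : (forall i, (i < n)%nat -> G i > 0) -> min_upto G n > 0.
Proof.
  induction n as [|n IH]; intro H; simpl; [lra|].
  apply Rmin_glb_lt; [apply IH; intros; apply H; lia|apply H; lia].
Qed.

Lemma min_upto_le G n i : (i < n)%nat -> min_upto G n <= G i.
Proof.
  induction n as [|n IH]; intro Hi; simpl; [lia|].
  destruct (Nat.eq_dec i n) as [->|]; [apply Rmin_r|].
  eapply Rle_trans; [apply Rmin_l|apply IH; lia].
Qed.

(** * Transitive interval maps *)

Section TransitiveIntervalMap.

Variables (J : R -> Prop) (g : R -> R).
Hypotheses (IJ : is_interval J) (Mg : maps_into J g) (Cg : cont_on J g).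

(* By the IVT each g^k - id has constant sign on (p, q); the induction on j passes
   through y = g^a x, which stays in (p, q). *)
Lemma no_periodic_iter_mul_sign p q a x : J p -> J q ->
  (forall z, p < z < q -> ~ periodic_point g z) -> (1 <= a)%nat ->
  p < x < q -> p < iter g a x < q ->
  forall j z, (1 <= j)%nat -> p < z < q -> (iter g (a * j) z - z) * (iter g a x - x) > 0.
Proof.
  intros Jp Jq Hfree Ha Hx Hax.
  assert (Same : forall k u v, (1 <= k)%nat -> p < u < q -> p < v < q ->
                   (iter g k u - u) * (iter g k v - v) > 0).
  { intros k u v Hk. apply (fixpoint_free_same_side J); auto.
    - exact (proj2 (iter_self_map J g k Mg Cg)).
    - intros z Hz E. apply (Hfree z Hz). now exists k. }
  assert (Hmove := Same a x x Ha Hx Hx).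
  set (y := iter g a x) in *.
  intros [|i] z Hj; [lia|]. clear Hj. revert z. induction i as [|i IH]; intros z Hz.
  - rewrite Nat.mul_1_r. now apply Same.
  - assert (Ex : iter g (a * S (S i)) x = iter g (a * S i) y).
    { unfold y. rewrite <- iter_add. f_equal. lia. }
    assert (Hx' : (iter g (a * S (S i)) x - x) * (y - x) > 0).
    { rewrite Ex. specialize (IH y Hax). nra. }
    assert (Hzx := Same (a * S (S i))%nat z x ltac:(nia) Hz Hx).
    nra.
Qed.

Hypotheses (ND : nondegenerate J) (Tg : auto_transitive J g).

Lemma transitive_dense_periodic : dense_periodic J g.
Proof.
  intros U OU [x0 Ux0].
  destruct (rel_open_contains_segment J U x0 IJ ND OU Ux0) as [p [q [Hpq HU]]].
  assert (HJ : forall t, p <= t <= q -> J t) by (intros t Ht; apply (proj1 OU), HU, Ht).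
  destruct (classic (exists z, p < z < q /\ periodic_point g z)) as [[z [Hz Pz]]|Hnone].
  { exists z. split; [apply HU; lra|exact Pz]. }
  assert (Hfree : forall z, p < z < q -> ~ periodic_point g z)
    by (intros z Hz Pz; apply Hnone; now exists z).
  set (c := (p + q) / 2).
  assert (Open : forall a b, p <= a < b -> b <= q ->
            rel_open J (fun t => J t /\ a < t < b) /\ nonempty (fun t => J t /\ a < t < b)).
  { intros a b Ha Hb. split; [apply rel_open_open_interval|].
    apply nonempty_open_interval; [lra|]. intros t Ht. apply HJ. lra. }
  destruct (Open c q ltac:(unfold c; lra) ltac:(lra)) as [OR NR].
  destruct (Open p c ltac:(unfold c; lra) ltac:(unfold c; lra)) as [OL NL].
  destruct (Tg _ _ OR NR OL NL) as [a [Ha [x [[_ Hx] [_ Hax]]]]].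
  destruct (Tg _ _ OL NL OR NR) as [b [Hb [t [[_ Ht] [_ Hbt]]]]].
  assert (Jp : J p) by (apply HJ; lra). assert (Jq : J q) by (apply HJ; lra).
  (* g^(ab) - id at c gets the sign of both g^a x - x < 0 and g^b t - t > 0 *)
  pose proof (no_periodic_iter_mul_sign p q a x Jp Jq Hfree Ha ltac:(lra) ltac:(lra)
                b c Hb ltac:(unfold c; lra)) as Left.
  pose proof (no_periodic_iter_mul_sign p q b t Jp Jq Hfree Hb ltac:(lra) ltac:(lra)
                a c Ha ltac:(unfold c; lra)) as Right.
  rewrite Nat.mul_comm in Right. exfalso. nra.
Qed.

Lemma periodic_points_disjoint_orbits : exists q1 q2 N1 N2,
  J q1 /\ J q2 /\ (1 <= N1)%nat /\ (1 <= N2)%nat /\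
  iter g N1 q1 = q1 /\ iter g N2 q2 = q2 /\ forall i j, iter g i q1 <> iter g j q2.
Proof.
  pose proof ND as [a [b [Ja [Jb Hab]]]].
  destruct (transitive_dense_periodic J) as [q1 [Jq1 [N1 [HN1 Hq1]]]].
  { split; [auto|]. intros x _. exists 1. split; [lra|auto]. }
  { now exists a. }
  destruct (avoid_finite (fun i => iter g i q1) a b N1 Hab)
    as [p [q [Hap [Hpq [Hqb Hav]]]]].
  destruct (transitive_dense_periodic (fun t => J t /\ p < t < q))
    as [q2 [[Jq2 Hq2] [N2 [HN2 Hper2]]]].
  { apply rel_open_open_interval. }
  { apply nonempty_open_interval; [exact Hpq|]. intros t Ht. apply (IJ a t b); auto; lra. }
  exists q1, q2, N1, N2. repeat split; auto.
  (* a common point would put q2 = g^(N2 j - j + i) q1 on the orbit of q1 *)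
  intros i j E.
  assert (E2 : iter g (N2 * j - j + i) q1 = q2).
  { rewrite iter_add, E, <- iter_add.
    replace (N2 * j - j + j)%nat with (N2 * j)%nat by nia.
    now apply iter_fixed_mul. }
  rewrite (iter_fixed_mod g N1) in E2 by (lia || exact Hq1).
  apply (Hav ((N2 * j - j + i) mod N1)%nat); [apply Nat.mod_upper_bound; lia|].
  now rewrite E2.
Qed.

Lemma far_orbit : exists d, d > 0 /\
  forall x, exists q, J q /\ forall i, Rabs (x - iter g i q) >= d.
Proof.
  destruct periodic_points_disjoint_orbits
    as [q1 [q2 [N1 [N2 [Jq1 [Jq2 [HN1 [HN2 [Hq1 [Hq2 Hdisj]]]]]]]]]].
  set (dist := fun i j => Rabs (iter g i q1 - iter g j q2)).
  set (d0 := min_upto (fun i => min_upto (dist i) N2) N1).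
  assert (Hd0 : d0 > 0).
  { apply min_upto_pos. intros i _. apply min_upto_pos. intros j _.
    apply Rabs_pos_lt. specialize (Hdisj i j). lra. }
  assert (Hdist : forall i j, dist i j >= d0).
  { intros i j. unfold dist.
    rewrite (iter_fixed_mod g N1 q1 i), (iter_fixed_mod g N2 q2 j) by (lia || auto).
    apply Rle_ge. eapply Rle_trans; [apply (min_upto_le _ N1 (i mod N1))|];
      [apply Nat.mod_upper_bound; lia|].
    apply (min_upto_le (dist (i mod N1)) N2), Nat.mod_upper_bound; lia. }
  exists (d0 / 2). split; [lra|]. intro x.
  destruct (classic (forall i, Rabs (x - iter g i q1) >= d0 / 2)) as [Far1|Near1];
    [now exists q1|].
  apply not_all_ex_not in Near1 as [i Hi].
  exists q2. split; [exact Jq2|]. intro j. specialize (Hdist i j). unfold dist in Hdist.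
  apply Rnot_ge_lt in Hi. split_Rabs; lra.
Qed.

Lemma transitive_sensitive : sensitive J g.
Proof.
  destruct far_orbit as [d [Hd Horb]].
  exists (d / 4). split; [lra|]. intros x U Jx OU Ux.
  destruct OU as [SU OU]. destruct (OU x Ux) as [e [He HUe]].
  set (r := Rmin e (d / 4)).
  assert (r <= e) by apply Rmin_l. assert (r <= d / 4) by apply Rmin_r.
  assert (Hr : r > 0) by (apply Rmin_glb_lt; lra).
  assert (Ball : rel_open J (fun t => J t /\ Rabs (t - x) < r)
                 /\ nonempty (fun t => J t /\ Rabs (t - x) < r)).
  { split; [apply rel_open_ball|]. exists x. split; [exact Jx|].
    rewrite Rminus_diag_eq, Rabs_R0; auto. }
  destruct Ball as [OB NB].
  destruct (transitive_dense_periodic _ OB NB) as [p [[Jp Hp] [N [HN HpN]]]].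
  destruct (Horb x) as [q [Jq Hq]].
  destruct (Tg _ (fun t => J t /\ forall i, (i <= N)%nat ->
                              Rabs (iter g i t - iter g i q) < d / 4) OB NB)
    as [k [_ [y [[Jy Hy] [_ Hyq]]]]].
  { now apply rel_open_orbit_tube. }
  { exists q. split; [exact Jq|]. intros i _. rewrite Rminus_diag_eq, Rabs_R0; lra. }
  (* at a time n = k + i, i <= N, fixing p, g^n y shadows g^i q, far from x and p *)
  destruct (nat_mul_between N k HN) as [j Hj].
  set (n := (N * j)%nat). set (i := (n - k)%nat).
  assert (Ey : iter g n y = iter g i (iter g k y)) by (rewrite <- iter_add; f_equal; lia).
  assert (Ep : iter g n p = p) by now apply iter_fixed_mul.
  specialize (Hyq i ltac:(lia)). rewrite <- Ey in Hyq. specialize (Hq i).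
  destruct (Rgt_dec (Rabs (iter g n x - iter g n p)) (d / 4)) as [Far|Near].
  - exists p, n. split; [apply HUe; auto; lra|exact Far].
  - exists y, n. split; [apply HUe; auto; lra|].
    apply Rnot_gt_le in Near. rewrite Ep in Near. split_Rabs; lra.
Qed.

End TransitiveIntervalMap.

(** * Back to the periodic non-autonomous system *)

Lemma na_transitive_of_period J f m : m_periodic f m ->
  auto_transitive J (naiter f m) -> na_transitive J f.
Proof.
  intros Hf Tg U V OU NU OV NV.
  destruct (Tg U V OU NU OV NV) as [n [Hn [x [Ux Vx]]]].
  exists (m * n)%nat. split; [destruct Hf; nia|].
  exists x. now rewrite naiter_period_mul.
Qed.

Lemma na_dense_periodic_of_period J f m : m_periodic f m ->
  dense_periodic J (naiter f m) -> na_dense_periodic J f.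
Proof.
  intros Hf Dg U OU NU. destruct (Dg U OU NU) as [x [Ux [N [HN Hx]]]].
  exists x. split; [exact Ux|]. exists (m * N)%nat. split; [destruct Hf; nia|].
  intros k _. rewrite <- Nat.mul_assoc, naiter_period_mul by exact Hf.
  now apply iter_fixed_mul.
Qed.

Lemma na_sensitive_of_period J f m : m_periodic f m ->
  sensitive J (naiter f m) -> na_sensitive J f.
Proof.
  intros Hf [d [Hd Sg]]. exists d. split; [exact Hd|].
  intros x U Jx OU Ux. destruct (Sg x U Jx OU Ux) as [y [n [Uy Hy]]].
  exists y, (m * n)%nat. split; [exact Uy|]. now rewrite !naiter_period_mul.
Qed.

Theorem mainTheorem18 (J : R -> Prop) (f : nat -> R -> R) (m : nat) :
  is_interval J -> nondegenerate J ->
  (forall n, (1 <= n)%nat -> cont_surj_self_map J (f n)) ->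
  m_periodic f m ->
  auto_transitive J (naiter f m) ->
  na_devaney_chaotic J f.
Proof.
  intros IJ ND Hf Hper Tg.
  assert (Hg : maps_into J (naiter f m) /\ cont_on J (naiter f m)).
  { apply naiter_self_map. intros k Hk. destruct (Hf k Hk) as [Mk [Ck _]]. now split. }
  destruct Hg as [Mg Cg].
  split; [|split].
  - exact (na_transitive_of_period J f m Hper Tg).
  - exact (na_dense_periodic_of_period J f m Hper
             (transitive_dense_periodic J _ IJ Mg Cg ND Tg)).
  - exact (na_sensitive_of_period J f m Hper
             (transitive_sensitive J _ IJ Mg Cg ND Tg)).
Qed.
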